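(* Under the setting below, for all $u,u'\in\Omega_\beta$, $\|S(u)-S(u')\|^2\ge\sigma\|u-u'\|^2$.
   Context: Let $k\ge2$, $L,\beta>0$, $\sigma>1$, $C_1,C_2>1$, and $\Phi_0:(-L-\beta,L+\beta)^k\to\mathbb R$ of class $C^2$ with, for all $x$ in its domain, $(\partial_1\Phi_0(x))^2\ge C_1^{k-1}C_2\sigma^k$ and $(\partial_j\Phi_0(x))^2\le\frac{(C_1-1)(C_2-1)}{k-1}\sigma$ for $2\le j\le k$. Let $\gamma>0$ with $\gamma^{-2}=C_1\sigma$, $\Gamma(x)=(\gamma^{-(j-1)}x_j)_{j=1}^k$, $\Omega_\beta=\Gamma^{-1}((-L-\beta,L+\beta)^k)$, and $S:\Omega_\beta\to\mathbb R^k$, $S(u)=(u_2/\gamma,\dots,u_k/\gamma,\gamma^{k-1}\Phi_0(\Gamma u))$. $\|\cdot\|$ is the Euclidean norm. (In the paper, $\sigma$ is moreover chosen larger than a threshold $S_k(k+2)$; this is not used here.) *)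

(* Points of R^k are row vectors 'rV[R]_k,
   coordinates are 0-indexed (paper's x_j is x 0 (j-1)). *)
From HB Require Import structures.
From mathcomp Require Import all_boot all_order all_algebra.
From mathcomp Require Import all_classical all_reals all_analysis.
Set Implicit Arguments. Unset Strict Implicit. Unset Printing Implicit Defensive.
Import Order.TTheory GRing.Theory Num.Theory.
Import numFieldNormedType.Exports.
Local Open Scope classical_set_scope.
Local Open Scope ring_scope.

Section Defs.
Variables (R : realType) (k : nat).

Definition sqnorm (v : 'rV[R]_k) : R := \sum_(i < k) (v 0 i) ^+ 2.

Definition partial (j : 'I_k) (f : 'rV[R]_k -> R) (x : 'rV[R]_k) : R :=
  derive f x (delta_mx 0 j).

Definition cube (a : R) : set 'rV[R]_k :=
  [set x | forall j : 'I_k, - a < x 0 j < a].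

Definition C2_on (U : set 'rV[R]_k) (f : 'rV[R]_k -> R) : Prop :=
  forall x, U x ->
    differentiable f x /\
    forall i : 'I_k, differentiable (partial i f) x /\
      forall j : 'I_k, {for x, continuous (partial j (partial i f))}.

Definition Gamma (g : R) (u : 'rV[R]_k) : 'rV[R]_k :=
  \row_(j < k) (g ^- j * u 0 j).

Definition Omega (g L b : R) : set 'rV[R]_k := Gamma g @^-1` cube (L + b).

(* S(u) = (u_2/g, ..., u_k/g, g^{k-1} Phi0(Gamma u)) *)
Definition Smap (g : R) (Phi0 : 'rV[R]_k -> R) (u : 'rV[R]_k) : 'rV[R]_k :=
  \row_(i < k) (if (i.+1 < k)%N then u 0 (insubd i i.+1) / g
                else g ^+ (k - 1) * Phi0 (Gamma g u)).

End Defs.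

From HB Require Import structures.
From mathcomp Require Import all_boot all_order all_algebra.
From mathcomp Require Import all_classical all_reals all_analysis.
From mathcomp Require Import ring lra.
Import Order.TTheory GRing.Theory Num.Theory.
Import numFieldNormedType.Exports.
Local Open Scope classical_set_scope.
Local Open Scope ring_scope.

(* By the mean value theorem on the segment [Gamma u', Gamma u] of the cube,
   the last coordinate of S(u) - S(u') is A + T, where A = gamma^(k-1) d_1 Phi0(xi) (u_1 - u'_1)
   and T collects the remaining partials.  The hypothesis on d_1 Phi0 and gamma^-2 = C1 sigma
   give A^2 >= C2 sigma (u_1 - u'_1)^2, while Cauchy-Schwarz and the hypothesis on the
   other partials give T^2 <= (C1 - 1)(C2 - 1) sigma Q with Q = sum_(j>=2) (u_j - u'_j)^2.
   The first k - 1 coordinates contribute C1 sigma Q, and Young's inequality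
   (A + T)^2 >= A^2 / C2 - T^2 / (C2 - 1) closes the estimate. *)

Section Inequalities.
Context {R : realFieldType}.

Lemma sqr_addr_le_mul (m S Q a : R) : 0 <= m -> 0 <= Q -> S ^+ 2 <= m * Q ->
  (S + a) ^+ 2 <= (m + 1) * (Q + a ^+ 2).
Proof.
move=> m0 Q0; have [->|mN0] := eqVneq m 0; first by rewrite mul0r => SQ; nra.
move=> SQ; have m_gt0 : 0 < m by rewrite lt_def mN0 m0.
suff : 2 * S * a <= Q + m * a ^+ 2 by nra.
rewrite -(ler_pM2l m_gt0); have := sqr_ge0 (S - m * a); nra.
Qed.

Lemma sqr_sum_le (m : nat) (a : 'I_m -> R) :
  (\sum_(i < m) a i) ^+ 2 <= m%:R * \sum_(i < m) a i ^+ 2.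
Proof.
elim: m a => [|m IH] a; first by rewrite !big_ord0 mul0r expr0n.
rewrite !big_ord_recr /= -natr1; apply: sqr_addr_le_mul => //.
by apply: sumr_ge0 => i _; apply: sqr_ge0.
Qed.

Lemma sqr_sum_mul_le (m : nat) (c d : 'I_m -> R) (M : R) :
  (forall i, c i ^+ 2 <= M) ->
  (\sum_(i < m) c i * d i) ^+ 2 <= m%:R * M * \sum_(i < m) d i ^+ 2.
Proof.
move=> cM; apply: le_trans (sqr_sum_le m (fun i => c i * d i)) _.
rewrite -mulrA ler_wpM2l // mulr_sumr; apply: ler_sum => i _.
by rewrite exprMn ler_wpM2r ?sqr_ge0.
Qed.

Lemma young_sqr_addr (A T c : R) : 1 < c -> A ^+ 2 / c - T ^+ 2 / (c - 1) <= (A + T) ^+ 2.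
Proof.
move=> c1; have c0 : 0 < c by exact: lt_trans c1.
have c10 : 0 < c - 1 by rewrite subr_gt0.
rewrite -(ler_pM2l (mulr_gt0 c0 c10)) mulrBr.
have -> : c * (c - 1) * (A ^+ 2 / c) = (c - 1) * A ^+ 2 by field; rewrite gt_eqF.
have -> : c * (c - 1) * (T ^+ 2 / (c - 1)) = c * T ^+ 2 by field; rewrite gt_eqF.
by have := sqr_ge0 ((c - 1) * A + c * T); nra.
Qed.

Lemma sqr_addr_lower_bound (s C1 C2 x A T Q : R) : 1 < C2 ->
  C2 * s * x ^+ 2 <= A ^+ 2 -> T ^+ 2 <= (C1 - 1) * (C2 - 1) * s * Q ->
  s * (x ^+ 2 + Q) <= C1 * s * Q + (A + T) ^+ 2.
Proof.
move=> C21 HA HT; have C20 : 0 < C2 by exact: lt_trans C21.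
have C210 : 0 < C2 - 1 by rewrite subr_gt0.
have hA : s * x ^+ 2 <= A ^+ 2 / C2.
  by rewrite ler_pdivlMr //; nra.
have hT : T ^+ 2 / (C2 - 1) <= (C1 - 1) * s * Q.
  by rewrite ler_pdivrMr //; nra.
by have := young_sqr_addr A T C2 C21; lra.
Qed.

End Inequalities.

Section Geometry.
Context {R : realType} {k : nat}.
Implicit Types (p q x : 'rV[R]_k) (U : set 'rV[R]_k).

Lemma cube_segment {a : R} {p q} :
  cube a p -> cube a q -> forall t : R, 0 <= t <= 1 -> cube a (q + t *: (p - q)).
Proof.
move=> cp cq t /andP[t0 t1] j; have /andP[p1 p2] := cp j; have /andP[q1 q2] := cq j.
rewrite !mxE; have [->|tN0] := eqVneq t 0; first by rewrite mul0r addr0 q1.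
have t_gt0 : 0 < t by rewrite lt_def tN0 t0.
by apply/andP; split; nra.
Qed.

Lemma mean_value_partial U (f : 'rV[R]_k -> R) p q :
  (forall t : R, 0 <= t <= 1 -> U (q + t *: (p - q))) ->
  (forall x, U x -> differentiable f x) ->
  exists2 xi, U xi & f p - f q = \sum_(j < k) (p - q) 0 j * partial j f xi.
Proof.
move=> segU df; set d := p - q; set h := fun t : R => f (q + t *: d).
have Useg : forall t : R, t \in `[0, 1]%R -> U (q + t *: d).
  by move=> t; rewrite in_itv /= => /andP[? ?]; apply: segU; apply/andP.
have dh : forall t : R, U (q + t *: d) -> is_derive t 1 h ('D_d f (q + t *: d)).
  move=> t Ut.
  have quot : (fun s : R => s^-1 *: ((h \o shift t) (s *: 1) - h t)) =
      (fun s : R => s^-1 *: ((f \o shift (q + t *: d)) (s *: d) - f (q + t *: d))).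
    apply/funext => s /=; rewrite /h -[s%:A]/(s * 1).
    by have -> : q + (s * 1 + t) *: d = s *: d + (q + t *: d)
      by apply/rowP => i; rewrite !mxE; ring.
  split; first by rewrite /derivable quot; exact: diff_derivable (df _ Ut).
  by rewrite /derive quot.
have dh01 : forall t : R, t \in `]0, 1[%R -> is_derive t 1 h ('D_d f (q + t *: d)).
  move=> t t01; apply: dh; apply: Useg.
  by move: t01; rewrite !in_itv /= => /andP[/ltW -> /ltW ->].
have ch : {within `[0, 1], continuous h}.
  apply: continuous_in_subspaceT => t; rewrite inE => t01.
  apply: differentiable_continuous; apply/derivable1_diffP.
  by case: (dh t (Useg t t01)).
have [c c01 hc] := MVT ltr01 dh01 ch.
have Uc : U (q + c *: d).
  by apply: Useg; move: c01; rewrite !in_itv /= => /andP[/ltW -> /ltW ->].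
exists (q + c *: d) => //.
move: hc; rewrite /h scale0r addr0 scale1r /d [q + _]addrC subrK subr0 mulr1 => ->.
move: Uc; rewrite /d; set xi := q + c *: (p - q) => /df dxi.
rewrite deriveE // {1}(row_sum_delta (p - q)) linear_sum.
by apply: eq_bigr => j _; rewrite linearZ /partial deriveE.
Qed.

End Geometry.

Section ExpandingMap.
Context {R : realType} {n : nat}.
Implicit Types (g : R) (u v : 'rV[R]_n.+1).

Lemma sqnorm_recl v : sqnorm v = v 0 0 ^+ 2 + \sum_(i < n) v 0 (lift ord0 i) ^+ 2.
Proof. by rewrite /sqnorm big_ord_recl. Qed.

Lemma Gamma_sub g u u' j : (Gamma g u - Gamma g u') 0 j = g ^- j * (u - u') 0 j.
Proof. by rewrite !mxE mulrBr. Qed.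

Lemma sqnorm_Smap_sub g (Phi0 : 'rV[R]_n.+1 -> R) u u' :
  sqnorm (Smap g Phi0 u - Smap g Phi0 u') =
  g ^- 2 * \sum_(i < n) (u - u') 0 (lift ord0 i) ^+ 2
  + (g ^+ n * (Phi0 (Gamma g u) - Phi0 (Gamma g u'))) ^+ 2.
Proof.
rewrite /sqnorm big_ord_recr /= mulr_sumr; congr (_ + _).
  apply: eq_bigr => i _; rewrite !mxE /= ltnS ltn_ord.
  have -> : forall d : 'I_n.+1, insubd d i.+1 = lift ord0 i.
    by move=> d; apply: val_inj; rewrite /= insubdK ?bump0 // unfold_in /= ltnS.
  by rewrite -mulrBl expr_div_n mulrC.
by rewrite !mxE /= ltnn subn1 -mulrBr.
Qed.

Lemma expr_scaled_sum_recl g (a P : 'I_n.+1 -> R) : g != 0 ->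
  g ^+ n * \sum_(j < n.+1) g ^- j * a j * P j =
  g ^+ n * P 0 * a 0 + \sum_(i < n) g ^+ (n - i.+1) * P (lift ord0 i) * a (lift ord0 i).
Proof.
move=> gN0; rewrite big_ord_recl mulrDr mulr_sumr expr0 invr1 mul1r mulrA.
congr (_ + _); first by rewrite mulrAC.
apply: eq_bigr => i _; rewrite lift0 exprB ?ltn_ord ?unitfE ?expf_neq0 //.
by rewrite !mulrA [RHS]mulrAC.
Qed.

Lemma expansion_estimate (sigma C1 C2 g : R) (P : 'I_n.+1 -> R) v :
  (0 < n)%N -> 1 < sigma -> 1 < C1 -> 1 < C2 -> 0 < g -> g ^- 2 = C1 * sigma ->
  C1 ^+ n * C2 * sigma ^+ n.+1 <= P 0 ^+ 2 ->
  (forall i, P (lift ord0 i) ^+ 2 <= (C1 - 1) * (C2 - 1) / n%:R * sigma) ->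
  sigma * sqnorm v <= g ^- 2 * \sum_(i < n) v 0 (lift ord0 i) ^+ 2
                      + (g ^+ n * \sum_(j < n.+1) g ^- j * v 0 j * P j) ^+ 2.
Proof.
move=> n0 s1 C11 C21 g0 gC1s Plead Ptail.
have gN0 : g != 0 by rewrite gt_eqF.
have g2C1s : g ^+ 2 * (C1 * sigma) = 1 by rewrite -gC1s mulfV // expf_neq0.
have g1 : g <= 1.
  have : 1 < C1 * sigma by rewrite (lt_le_trans C11) // ler_peMr ?ltW // (lt_trans ltr01).
  nra.
rewrite sqnorm_recl expr_scaled_sum_recl // gC1s.
apply: (@sqr_addr_lower_bound _ _ _ C2) => //.
- have scale : (g ^+ n) ^+ 2 * (C1 ^+ n * C2 * sigma ^+ n.+1) = C2 * sigma.
    have -> : C1 ^+ n * C2 * sigma ^+ n.+1 = C2 * sigma * (C1 * sigma) ^+ n.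
      by rewrite exprMn exprS; ring.
    by rewrite mulrCA -exprM mulnC exprM -exprMn g2C1s expr1n mulr1.
  rewrite -scale !exprMn ler_wpM2r ?sqr_ge0 //.
  by rewrite ler_wpM2l ?sqr_ge0.
- set M := (C1 - 1) * (C2 - 1) / n%:R * sigma.
  have -> : (C1 - 1) * (C2 - 1) * sigma = n%:R * M.
    by rewrite /M; field; rewrite pnatr_eq0 -lt0n.
  apply: sqr_sum_mul_le => i.
  rewrite exprMn (le_trans _ (Ptail i)) // ler_piMl ?sqr_ge0 //.
  by rewrite -exprM exprn_ile1 // ltW.
Qed.

End ExpandingMap.

Theorem proposition3p1 (R : realType) (k : nat) (L b sigma C1 C2 g : R)
  (Phi0 : 'rV[R]_k -> R) :
  (2 <= k)%N -> 0 < L -> 0 < b -> 1 < sigma -> 1 < C1 -> 1 < C2 ->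
  C2_on (cube (L + b)) Phi0 ->
  (forall x, cube (L + b) x -> forall j : 'I_k, val j = 0%N ->
     C1 ^+ (k - 1) * C2 * sigma ^+ k <= (partial j Phi0 x) ^+ 2) ->
  (forall x, cube (L + b) x -> forall j : 'I_k, (0 < val j)%N ->
     (partial j Phi0 x) ^+ 2 <= (C1 - 1) * (C2 - 1) / (k - 1)%:R * sigma) ->
  0 < g -> g ^- 2 = C1 * sigma ->
  forall u u' : 'rV[R]_k, Omega g L b u -> Omega g L b u' ->
    sigma * sqnorm (u - u') <= sqnorm (Smap g Phi0 u - Smap g Phi0 u').
Proof.
case: k Phi0 => [//|n] Phi0 k2 _ _ s1 C11 C21 Phi0C2 Plead Ptail g0 gC1s u u' Ou Ou'.
have [xi cube_xi Phi0_mvt] := mean_value_partial _ Phi0 _ _ (cube_segment Ou Ou')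
  (fun x cube_x => (Phi0C2 x cube_x).1).
rewrite sqnorm_Smap_sub Phi0_mvt.
under [X in g ^+ n * X]eq_bigr do rewrite Gamma_sub.
apply: (@expansion_estimate _ _ sigma C1 C2) => //.
- by have := Plead xi cube_xi ord0 erefl; rewrite subn1.
- by move=> i; have := Ptail xi cube_xi (lift ord0 i) isT; rewrite subn1.
Qed.
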